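(* Let $\sigma_\theta$, $A_\theta$, $\Sigma$ be as in the context, with $\Sigma\ne\emptyset$, and assume that for every $\delta>0$ there is $\nu_\delta>0$ such that $A_\theta(x)\ge\nu_\delta I$ for all $\theta\in\Theta$ and all $x\in\mathbb T^N$ with $\operatorname{dist}(x,\Sigma)>\delta$. Then for every $\kappa>0$ the condition (SS$_\kappa$) holds.
   Context: $\mathbb T^N=\mathbb R^N/\mathbb Z^N$, $\Theta$ a metric space, $C>0$ fixed; for each $\theta\in\Theta$, $\sigma_\theta\in W^{1,\infty}(\mathbb T^N;\mathcal M_N)$ with $|\sigma_\theta|,|D\sigma_\theta|\le C$ and $A_\theta=\sigma_\theta\sigma_\theta^T$. $\Sigma:=\{x\in\mathbb T^N:A_\theta(x)=0\ \forall\theta\}$. $\pi:\mathbb R^N\to\mathbb T^N$ is the projection; $\tilde\Sigma=\pi^{-1}(\Sigma)$, $\tilde\sigma_\theta=\sigma_\theta\circ\pi$, $\tilde A_\theta=\tilde\sigma_\theta\tilde\sigma_\theta^T$, $\tilde\Sigma_\delta=\{\tilde x:\operatorname{dist}(\tilde x,\tilde\Sigma)\le\delta\}$. Condition (SS$_\kappa$): for every $\delta>0$ there exist $\tilde\psi_\delta\in C^2(\mathbb R^N)$ and a bounded open set $\Omega_\delta\subset\mathbb R^N$ with $[0,1]^N\subset\Omega_\delta$, $\tilde\psi_\delta\le0$ in $\Omega_\delta$, $\tilde\psi_\delta\ge0$ in $\mathbb R^N\setminus\Omega_\delta$, and $\inf_{\theta\in\Theta}\{-\mathrm{tr}(\tilde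 A_\theta(\tilde x)D^2\tilde\psi_\delta(\tilde x))\}-\kappa|D\tilde\psi_\delta(\tilde x)|>0$ for all $\tilde x\in\tilde\Sigma_\delta^C\cap\Omega_\delta$. *)

From mathcomp Require Import ssreflect ssrfun ssrbool eqtype ssrnat seq fintype bigop.
From Stdlib Require Import Reals ZArith.

Set Implicit Arguments.
Unset Strict Implicit.

Local Open Scope R_scope.

Definition vec (N : nat) := 'I_N -> R.
Definition mat (N : nat) := 'I_N -> 'I_N -> R.

Definition sumI (N : nat) (f : 'I_N -> R) : R := \big[Rplus/0]_(i < N) f i.

Definition vadd N (x y : vec N) : vec N := fun i => x i + y i.
Definition vsub N (x y : vec N) : vec N := fun i => x i - y i.
Definition vshift N (x : vec N) (i : 'I_N) (t : R) : vec N :=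
  fun k => if k == i then x k + t else x k.
Definition vaddZ N (x : vec N) (z : 'I_N -> Z) : vec N := fun i => x i + IZR (z i).

Definition vnorm N (x : vec N) : R := sqrt (sumI (fun i => x i ^ 2)).
Definition mnorm N (M : mat N) : R := sqrt (sumI (fun i => sumI (fun j => M i j ^ 2))).
Definition msub N (M P : mat N) : mat N := fun i j => M i j - P i j.

Definition AAt N (s : mat N) : mat N := fun i j => sumI (fun k => s i k * s j k).
Definition trmul N (M P : mat N) : R := sumI (fun i => sumI (fun j => M i j * P j i)).

(* dist(x, S) <= d  (inf over S of |x - s|; +infinity when S is empty) *)
Definition dist_le N (S : vec N -> Prop) (x : vec N) (d : R) : Prop :=
  forall eps, 0 < eps -> exists s, S s /\ vnorm (vsub x s) < d + eps.

Definition cont_RN N (g : vec N -> R) : Prop :=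
  forall x eps, 0 < eps -> exists r, 0 < r /\
    forall y, vnorm (vsub y x) < r -> Rabs (g y - g x) < eps.

Definition has_partial N (f : vec N -> R) (i : 'I_N) (x : vec N) (l : R) : Prop :=
  derivable_pt_lim (fun t => f (vshift x i t)) 0 l.

(* f is C^2 on R^N with gradient Df and Hessian D2f:
   all first and second partial derivatives exist everywhere, and the second
   ones are continuous (this is the usual characterisation of C^2). *)
Definition C2_with N (f : vec N -> R) (Df : vec N -> vec N) (D2f : vec N -> mat N) : Prop :=
  (forall x i, has_partial f i x (Df x i)) /\
  (forall x i j, has_partial (fun y => Df y i) j x (D2f x i j)) /\
  (forall i j, cont_RN (fun y => D2f y i j)).

Definition open_RN N (O : vec N -> Prop) : Prop :=
  forall x, O x -> exists r, 0 < r /\ forall y, vnorm (vsub y x) < r -> O y.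

Definition bounded_RN N (O : vec N -> Prop) : Prop :=
  exists M, forall x, O x -> vnorm x <= M.

Definition unit_cube N (x : vec N) : Prop := forall i, 0 <= x i <= 1.

(* Standing assumptions on the family sigma_theta, lifted to R^N:
   Z^N-periodic (i.e. a function on T^N), |sigma| <= C and Lipschitz with
   constant C (W^{1,infty}(T^N) with |D sigma| <= C). *)
Definition sigma_family N (Theta : Type) (C : R) (sigma : Theta -> vec N -> mat N) : Prop :=
  (forall th x z, sigma th (vaddZ x z) = sigma th x) /\
  (forall th x, mnorm (sigma th x) <= C) /\
  (forall th x y, mnorm (msub (sigma th x) (sigma th y)) <= C * vnorm (vsub x y)).

(* tilde Sigma = pi^{-1}(Sigma) : common zero set of all A_theta *)
Definition SigmaT N (Theta : Type) (sigma : Theta -> vec N -> mat N) (x : vec N) : Prop :=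
  forall th i j, AAt (sigma th x) i j = 0.

Definition SS N (Theta : Type) (sigma : Theta -> vec N -> mat N) (kappa : R) : Prop :=
  forall delta, 0 < delta ->
  exists (psi : vec N -> R) (Dpsi : vec N -> vec N) (D2psi : vec N -> mat N)
         (Omega : vec N -> Prop),
    C2_with psi Dpsi D2psi /\
    open_RN Omega /\ bounded_RN Omega /\
    (forall x, unit_cube x -> Omega x) /\
    (forall x, Omega x -> psi x <= 0) /\
    (forall x, ~ Omega x -> 0 <= psi x) /\
    (forall x, ~ dist_le (SigmaT sigma) x delta -> Omega x ->
       (* inf_theta { - tr(A_theta D^2 psi) } - kappa |D psi| > 0 *)
       exists m, m - kappa * vnorm (Dpsi x) > 0 /\
         forall th, m <= - trmul (AAt (sigma th x)) (D2psi x)).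

(* Fix a point s of the lifted zero set and, for a rate lam > 0 and a level
   R2 > 0, the radial barrier
       psi(x) = exp(-lam R2) - exp(-lam |x - s|^2)
   on the ball Omega = { |x - s|^2 < R2 }.  Writing w = 2 lam exp(-lam|x-s|^2),
       D psi = w (x - s),     D^2 psi = w (I - 2 lam (x - s)(x - s)^T),
   so  -tr(A D^2 psi) = w (2 lam (x-s)^T A (x-s) - tr A).  Far from Sigma the
   point x satisfies |x - s| >= delta, ellipticity gives (x-s)^T A (x-s) >=
   nu |x - s|^2 and the Frobenius bound gives tr A = |sigma|^2 <= C^2; hence a
   large rate lam (depending on C, kappa, nu, delta, R2) makes the margin
   -tr(A D^2 psi) - kappa |D psi| positive.  Choosing R2 so that Omega
   contains the unit cube finishes the proof. *)
From HB Require Import structures.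
From mathcomp Require Import ssreflect ssrfun ssrbool eqtype ssrnat seq fintype bigop.
From Stdlib Require Import Reals Lra Psatz FunctionalExtensionality.
From Coquelicot Require Import Coquelicot.
Local Open Scope R_scope.
Set Implicit Arguments.

HB.instance Definition _ :=
  Monoid.isComLaw.Build R 0 Rplus (fun a b c => esym (Rplus_assoc a b c)) Rplus_comm Rplus_0_l.

Lemma sumI_add N (f g : 'I_N -> R) : sumI (fun i => f i + g i) = sumI f + sumI g.
Proof. rewrite /sumI; exact: (big_split (Rplus : Monoid.com_law 0)). Qed.

Lemma sumI_scal N c (f : 'I_N -> R) : sumI (fun i => c * f i) = c * sumI f.
Proof. rewrite /sumI; apply: (big_rec2 (fun a b => a = c * b)) => [|i a b _ ->]; ring. Qed.

Lemma sumI_ext N (f g : 'I_N -> R) : (forall i, f i = g i) -> sumI f = sumI g.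
Proof. move=> H; rewrite /sumI; apply: eq_bigr => i _; exact: H. Qed.

Lemma sumI_sub N (f g : 'I_N -> R) : sumI (fun i => f i - g i) = sumI f - sumI g.
Proof.
have -> : sumI f - sumI g = sumI f + (-1) * sumI g by ring.
by rewrite -sumI_scal -sumI_add; apply: sumI_ext => i; ring.
Qed.

Lemma sumI_le N (f g : 'I_N -> R) : (forall i, f i <= g i) -> sumI f <= sumI g.
Proof.
move=> H; rewrite /sumI.
by apply: (big_rec2 (fun a b => a <= b)) => [|i a b _ Hab]; [lra | have := H i; lra].
Qed.

Lemma sumI_ge0 N (f : 'I_N -> R) : (forall i, 0 <= f i) -> 0 <= sumI f.
Proof. by move=> H; rewrite -(Rmult_0_l (sumI f)) -sumI_scal; apply: sumI_le => i; rewrite Rmult_0_l. Qed.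

Lemma sumI_delta N (f : 'I_N -> R) i : sumI (fun k => if k == i then f k else 0) = f i.
Proof. rewrite /sumI (bigD1 i) //= eqxx big1 /=; [ring | by move=> k /negbTE ->]. Qed.

Lemma sumI_single N (f : 'I_N -> R) i : (forall k, 0 <= f k) -> f i <= sumI f.
Proof.
move=> H; rewrite /sumI (bigD1 i) //=.
have Hrest : 0 <= \big[Rplus/0]_(k | k != i) f k by apply: (big_ind (fun x => 0 <= x)) => // *; lra.
change (f i <= f i + \big[Rplus/0]_(k | k != i) f k); lra.
Qed.

Lemma coord_le_vnorm N (v : vec N) i : Rabs (v i) <= vnorm v.
Proof.
rewrite /vnorm -sqrt_Rsqr_abs Rsqr_pow2; apply: sqrt_le_1_alt.
by apply: (@sumI_single _ (fun k => v k ^ 2)) => k; apply: pow2_ge_0.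
Qed.

Lemma cont_ext N (f g : vec N -> R) : (forall y, f y = g y) -> cont_RN f -> cont_RN g.
Proof. move=> E Hf x eps He; have [r [Hr H]] := Hf x eps He; exists r; split => // y Hy; rewrite -!E; exact: H. Qed.

Lemma cont_const N c : cont_RN (fun _ : vec N => c).
Proof. by move=> x eps He; exists 1; split; [lra | move=> y _; rewrite Rminus_diag Rabs_R0]. Qed.

Lemma cont_coord N (i : 'I_N) : cont_RN (fun y : vec N => y i).
Proof. move=> x eps He; exists eps; split => // y Hy; have := coord_le_vnorm (vsub y x) i; change (vsub y x i) with (y i - x i); lra. Qed.

Lemma cont_add N (f g : vec N -> R) : cont_RN f -> cont_RN g -> cont_RN (fun y => f y + g y).
Proof.
move=> Hf Hg x eps He.
have [r1 [H1 Hr1]] := Hf x (eps / 2) ltac:(lra).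
have [r2 [H2 Hr2]] := Hg x (eps / 2) ltac:(lra).
exists (Rmin r1 r2); split => [|y Hy]; first exact: Rmin_pos.
have h1 := Hr1 y ltac:(have := Rmin_l r1 r2; lra).
have h2 := Hr2 y ltac:(have := Rmin_r r1 r2; lra).
have := Rabs_triang (f y - f x) (g y - g x).
rewrite (_ : f y - f x + (g y - g x) = f y + g y - (f x + g x)); [lra | ring].
Qed.

Lemma cont_comp N (h : R -> R) (g : vec N -> R) :
  (forall t, continuous h t) -> cont_RN g -> cont_RN (fun y => h (g y)).
Proof.
move=> Hh Hg x eps He.
have [alp [Ha Hal]] := (proj2 (continuity_pt_filterlim h (g x)) (Hh (g x))) eps He.
have [r [Hr H]] := Hg x alp Ha.
exists r; split => // y Hy.
case: (Req_dec (g y) (g x)) => [->|Hne]; first by rewrite Rminus_diag Rabs_R0.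
exact: (Hal (g y) (conj (conj I (not_eq_sym Hne)) (H y Hy))).
Qed.

Lemma cont_comp_derivable N (h : R -> R) (g : vec N -> R) :
  (forall t, ex_derive h t) -> cont_RN g -> cont_RN (fun y => h (g y)).
Proof. by move=> Hh; apply: cont_comp => t; apply: ex_derive_continuous. Qed.

(* Products are continuous, by polarization: fg = ((f+g)^2 - (f-g)^2)/4. *)
Lemma cont_mul N (f g : vec N -> R) : cont_RN f -> cont_RN g -> cont_RN (fun y => f y * g y).
Proof.
move=> Hf Hg.
have Hng : cont_RN (fun y => - g y).
  by apply: (cont_comp_derivable (h := Ropp)) Hg => t; auto_derive.
have Hsq (k : vec N -> R) (c : R) : cont_RN k -> cont_RN (fun y => c * k y ^ 2).
  by apply: (cont_comp_derivable (h := fun t => c * t ^ 2)) => t; auto_derive.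
apply: cont_ext (cont_add (Hsq _ (/ 4) (cont_add Hf Hg)) (Hsq _ (- / 4) (cont_add Hf Hng))).
move=> y; field.
Qed.

Lemma cont_sum N (I : Type) (r : seq I) (F : I -> vec N -> R) :
  (forall k, cont_RN (F k)) -> cont_RN (fun y => \big[Rplus/0]_(k <- r) F k y).
Proof.
move=> HF; elim: r => [|a r IH].
  by apply: cont_ext (cont_const 0) => y; rewrite big_nil.
by apply: cont_ext (cont_add (HF a) IH) => y; rewrite big_cons.
Qed.

Definition sqdist N (s x : vec N) : R := sumI (fun k => (x k - s k) ^ 2).

Lemma sqdist_ge0 N (s x : vec N) : 0 <= sqdist s x.
Proof. by apply: sumI_ge0 => k; apply: pow2_ge_0. Qed.

Lemma sqdist_shift N (s x : vec N) i t :
  sqdist s (vshift x i t) = sqdist s x + (2 * t * (x i - s i) + t ^ 2).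
Proof.
rewrite /sqdist -(sumI_delta (fun k => 2 * t * (x k - s k) + t ^ 2) i) -sumI_add.
by apply: sumI_ext => k; rewrite /vshift; case: eqP => [->|_]; ring.
Qed.

Lemma cont_sqdist N (s : vec N) : cont_RN (sqdist s).
Proof.
apply: (@cont_sum N _ _ (fun k y => (y k - s k) ^ 2)) => k.
by apply: (cont_comp_derivable (h := fun t => (t - s k) ^ 2)) (cont_coord k) => t; auto_derive.
Qed.

Lemma sublevel_open N (s : vec N) r : open_RN (fun x => sqdist s x < r).
Proof.
move=> x Hx; have [e [He H]] := (cont_sqdist s : cont_RN _) x (r - sqdist s x) ltac:(lra).
exists e; split => // y Hy; have := H y Hy; have := Rle_abs (sqdist s y - sqdist s x); lra.
Qed.

Lemma sublevel_bounded N (s : vec N) r : bounded_RN (fun x => sqdist s x < r).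
Proof.
exists (sqrt (2 * r + 2 * sumI (fun k => s k ^ 2))) => x Hx.
apply: sqrt_le_1_alt.
apply: Rle_trans (_ : sumI (fun k => 2 * (x k - s k) ^ 2 + 2 * s k ^ 2) <= _).
  by apply: sumI_le => k; have := pow2_ge_0 (x k - 2 * s k); nra.
rewrite sumI_add !sumI_scal; rewrite /sqdist in Hx; lra.
Qed.

(* A level whose sublevel ball around s contains the unit cube. *)
Definition cube_radius N (s : vec N) : R := sumI (fun k => 2 + 2 * s k ^ 2) + 1.

Lemma cube_radius_ge1 N (s : vec N) : 1 <= cube_radius s.
Proof.
have : 0 <= sumI (fun k => 2 + 2 * s k ^ 2) by apply: sumI_ge0 => k; have := pow2_ge_0 (s k); lra.
rewrite /cube_radius; lra.
Qed.

Lemma cube_in_sublevel N (s x : vec N) : unit_cube x -> sqdist s x < cube_radius s.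
Proof.
move=> Hx; apply: Rle_lt_trans (_ : sumI (fun k => 2 + 2 * s k ^ 2) < _); last by rewrite /cube_radius; lra.
by apply: sumI_le => k; have := Hx k; have := pow2_ge_0 (x k + s k); nra.
Qed.

Lemma far_sqdist N (S : vec N -> Prop) (s x : vec N) d :
  0 <= d -> S s -> ~ dist_le S x d -> d ^ 2 <= sqdist s x.
Proof.
move=> Hd Hs Hfar.
have Hle : d <= sqrt (sqdist s x).
  apply: Rnot_lt_le => Hlt; apply: Hfar => eps He; exists s; split => //.
  change (sqrt (sqdist s x) < d + eps); lra.
have := sqrt_sqrt _ (sqdist_ge0 s x); nra.
Qed.

Definition qform N (M : mat N) (xi : vec N) : R :=
  sumI (fun i => sumI (fun j => xi i * M i j * xi j)).

Definition trace N (M : mat N) : R := sumI (fun i => M i i).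

(* tr(sigma sigma^T) is the squared Frobenius norm of sigma, hence <= C^2. *)
Lemma trace_AAt_le N (sg : mat N) C : mnorm sg <= C -> trace (AAt sg) <= C * C.
Proof.
rewrite /mnorm => Hm.
have HS : 0 <= sumI (fun i => sumI (fun j => sg i j ^ 2)).
  by apply: sumI_ge0 => i; apply: sumI_ge0 => j; apply: pow2_ge_0.
rewrite (_ : trace _ = sumI (fun i => sumI (fun j => sg i j ^ 2))).
  by have := sqrt_sqrt _ HS; have := sqrt_pos (sumI (fun i => sumI (fun j => sg i j ^ 2))); nra.
by apply: sumI_ext => i; apply: sumI_ext => j; rewrite /=; ring.
Qed.

Lemma exp_monotone a b : a <= b -> exp a <= exp b.
Proof. by case=> [Hab | ->]; [apply: Rlt_le; apply: exp_increasing | apply: Rle_refl]. Qed.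

Section Barrier.
Variables (N : nat) (s : vec N) (lam R2 : R).

Definition psi (x : vec N) : R := exp (- lam * R2) - exp (- lam * sqdist s x).

Definition weight (x : vec N) : R := 2 * lam * exp (- lam * sqdist s x).

Definition Dpsi (x : vec N) : vec N := fun i => weight x * (x i - s i).

Definition D2psi (x : vec N) : mat N := fun i j =>
  weight x * ((if i == j then 1 else 0) - 2 * lam * (x i - s i) * (x j - s j)).

Lemma psi_partial x i : has_partial psi i x (Dpsi x i).
Proof.
rewrite /has_partial /Dpsi /weight.
have -> : (fun t => psi (vshift x i t)) =
   (fun t => exp (- lam * R2) - exp (- lam * (sqdist s x + (2 * t * (x i - s i) + t ^ 2)))).
  by apply: functional_extensionality => t; rewrite /psi sqdist_shift.
apply/is_derive_Reals; auto_derive => //.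
rewrite (_ : sqdist s x + _ = sqdist s x); ring.
Qed.

Lemma Dpsi_partial x i j : has_partial (fun y => Dpsi y i) j x (D2psi x i j).
Proof.
rewrite /has_partial /Dpsi /D2psi /weight.
have -> : (fun t => 2 * lam * exp (- lam * sqdist s (vshift x j t)) * (vshift x j t i - s i)) =
   (fun t => 2 * lam * exp (- lam * (sqdist s x + (2 * t * (x j - s j) + t ^ 2))) *
             (x i - s i + (if i == j then t else 0))).
  apply: functional_extensionality => t; rewrite sqdist_shift /vshift.
  by case: (i == j); ring.
by case: eqP => [->|_]; apply/is_derive_Reals; auto_derive => //;
  rewrite (_ : sqdist s x + _ = sqdist s x); ring.
Qed.

Lemma D2psi_continuous i j : cont_RN (fun y => D2psi y i j).
Proof.
have Hw : cont_RN weight.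
  by apply: (cont_comp_derivable (h := fun t => 2 * lam * exp (- lam * t))) (cont_sqdist s)
    => t; auto_derive.
have Hc (k : 'I_N) (a : R) : cont_RN (fun y : vec N => a * (y k - s k)).
  by apply: (cont_comp_derivable (h := fun t => a * (t - s k))) (cont_coord k) => t; auto_derive.
apply: cont_mul Hw _.
apply: cont_ext (cont_add (cont_const (if i == j then 1 else 0))
                          (cont_mul (Hc i (- (2 * lam))) (Hc j 1))) => y; ring.
Qed.

Lemma psi_C2 : C2_with psi Dpsi D2psi.
Proof. by split; [exact: psi_partial | split; [exact: Dpsi_partial | exact: D2psi_continuous]]. Qed.

Lemma psi_le0_in x : 0 <= lam -> sqdist s x < R2 -> psi x <= 0.
Proof.
move=> Hlam Hx; rewrite /psi.
suff : exp (- lam * R2) <= exp (- lam * sqdist s x) by lra.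
by apply: exp_monotone; nra.
Qed.

Lemma psi_ge0_out x : 0 <= lam -> ~ sqdist s x < R2 -> 0 <= psi x.
Proof.
move=> Hlam Hx; rewrite /psi.
suff : exp (- lam * sqdist s x) <= exp (- lam * R2) by lra.
by apply: exp_monotone; nra.
Qed.

Lemma weight_pos x : 0 < lam -> 0 < weight x.
Proof. by move=> Hlam; have := exp_pos (- lam * sqdist s x); rewrite /weight; nra. Qed.

Lemma Dpsi_norm x : 0 <= lam -> vnorm (Dpsi x) = weight x * sqrt (sqdist s x).
Proof.
move=> Hlam; have Hw : 0 <= weight x by have := exp_pos (- lam * sqdist s x); rewrite /weight; nra.
rewrite /vnorm (_ : sumI _ = weight x ^ 2 * sqdist s x).
  by rewrite sqrt_mult_alt ?sqrt_pow2 //; apply: pow2_ge_0.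
by rewrite /sqdist -sumI_scal; apply: sumI_ext => i; rewrite /Dpsi; ring.
Qed.

Lemma trmul_D2psi (M : mat N) x :
  trmul M (D2psi x) = weight x * (trace M - 2 * lam * qform M (vsub x s)).
Proof.
rewrite /trmul /trace /qform -!sumI_scal -sumI_sub -sumI_scal; apply: sumI_ext => i.
rewrite -(sumI_delta (fun j => M i j) i) -!sumI_scal -sumI_sub -sumI_scal.
by apply: sumI_ext => j; rewrite /D2psi /vsub eq_sym; case: (i == j); ring.
Qed.

Lemma barrier_supersolution (M : mat N) x nu C : 0 < lam ->
  trace M <= C * C -> qform M (vsub x s) >= nu * sqdist s x ->
  weight x * (2 * lam * nu * sqdist s x - C * C) <= - trmul M (D2psi x).
Proof.
move=> Hlam HT HQ; rewrite trmul_D2psi.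
have Hw := weight_pos x Hlam.
suff : 2 * lam * nu * sqdist s x - C * C <= - (trace M - 2 * lam * qform M (vsub x s)) by nra.
nra.
Qed.

End Barrier.

(* The rate lam making the barrier margin positive at distance >= delta from s
   inside the ball of squared radius R2. *)
Definition barrier_rate (C kappa nu delta R2 : R) : R :=
  (C * C + kappa * sqrt R2 + 1) / (2 * nu * delta ^ 2).

Lemma barrier_rate_pos C kappa nu delta R2 :
  0 <= kappa -> 0 < nu -> 0 < delta -> 0 < barrier_rate C kappa nu delta R2.
Proof.
move=> Hk Hnu Hd; have := sqrt_pos R2; have := pow_lt _ 2 Hd => Hd2 Hs.
by apply: Rdiv_lt_0_compat; nra.
Qed.

Lemma barrier_margin_pos C kappa nu delta R2 u w :
  0 <= kappa -> 0 < nu -> 0 < delta -> delta ^ 2 <= u <= R2 -> 0 < w ->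
  let lam := barrier_rate C kappa nu delta R2 in
  w * (2 * lam * nu * u - C * C) - kappa * (w * sqrt u) > 0.
Proof.
move=> Hk Hnu Hd [Hlo Hhi] Hw lam.
have Hd2 : 0 < delta ^ 2 by apply: pow_lt.
have Hrate : 2 * lam * nu * delta ^ 2 = C * C + kappa * sqrt R2 + 1.
  by rewrite /lam /barrier_rate; field; split; lra.
have Hlam : 0 < lam by apply: barrier_rate_pos.
have Hsq : sqrt u <= sqrt R2 by apply: sqrt_le_1_alt.
have Hgrow : 2 * lam * nu * delta ^ 2 <= 2 * lam * nu * u by apply: Rmult_le_compat_l; nra.
suff : 0 < 2 * lam * nu * u - C * C - kappa * sqrt u by nra.
nra.
Qed.

Theorem proposition2p5 (N : nat) (Theta : Type) (C : R) (HC : 0 < C)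
  (sigma : Theta -> vec N -> mat N)
  (Hsig : sigma_family C sigma)
  (Hne : exists x, SigmaT sigma x)
  (Hell : forall delta, 0 < delta -> exists nu, 0 < nu /\
     forall th x, ~ dist_le (SigmaT sigma) x delta ->
       forall xi : vec N,
         sumI (fun i => sumI (fun j => xi i * AAt (sigma th x) i j * xi j))
           >= nu * sumI (fun i => xi i ^ 2)) :
  forall kappa, 0 < kappa -> SS sigma kappa.
Proof.
case: Hne => s Hs kappa Hk delta Hd.
have [nu [Hnu Hel]] := Hell delta Hd.
have [_ [Hbound _]] := Hsig.
pose R2 := cube_radius s.
pose lam := barrier_rate C kappa nu delta R2.
have Hlam : 0 < lam by apply: barrier_rate_pos; lra.
exists (psi s lam R2), (Dpsi s lam), (D2psi s lam), (fun x => sqdist s x < R2).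
split; first exact: psi_C2.
split; first exact: sublevel_open.
split; first exact: sublevel_bounded.
split; first by move=> x; apply: cube_in_sublevel.
split; first by move=> x; apply: psi_le0_in; lra.
split; first by move=> x; apply: psi_ge0_out; lra.
move=> x Hfar Hin.
have Hu : delta ^ 2 <= sqdist s x by apply: far_sqdist Hs Hfar; lra.
exists (weight s lam x * (2 * lam * nu * sqdist s x - C * C)); split.
- rewrite Dpsi_norm; last lra.
  by apply: barrier_margin_pos; [lra | lra | lra | lra | apply: weight_pos].
- move=> th; apply: barrier_supersolution => //; first exact: trace_AAt_le.
  exact: (Hel th x Hfar (vsub x s)).
Qed.
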